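(* Let $\mathcal D=(D,<,\rho)$ be a computable partially ordered set. There exists $U\in\mathrm{Max}_{\mathrm{PR}}[\{0,1\}^*\to\mathcal D]$ such that for every $F\in\mathrm{Max}_{\mathrm{PR}}[\{0,1\}^*\to\mathcal D]$ there is a constant $c$ with $K_U(d)\le K_F(d)+c$ for every $d$ in the range of $F$.
   Context: A computable partially ordered set is a triple $\mathcal D=(D,<,\rho)$ where $\rho:\mathbb N\to D$ is a bijection and $<$ is a strict partial order on $D$ with $\{(m,n):\rho(m)<\rho(n)\}$ computable; a partial function into $D$ is partial computable if its composition with $\rho^{-1}$ is. For a partial $f:\{0,1\}^*\times\mathbb N\to D$ monotone increasing in its second argument on its domain, $\max^{\mathcal D}f$ is the partial function defined exactly at those $p$ for which $\{f(p,t):t\in\mathbb N,\ f(p,t)\text{ defined}\}$ is finite and non-empty, with value its maximum element. $\mathrm{Max}_{\mathrm{PR}}[\{0,1\}^*\to\mathcal D]$ is the class of all $\max^{\mathcal D}f$ with $f$ partial computable and monotone increasing in its second argument. For a partial $\varphi:\{0,1\}^*\to D$, $K_\varphi:D\to\mathbb N$ is the partial function $K_\varphi(d)=\min\{|p|:\varphi(p)=d\}$, defined on the range of $\varphi$. *)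

From Stdlib Require Import Arith List.
Import ListNotations.

Inductive prf : Type :=
| PZero : prf
| PSucc : prf
| PProj : nat -> prf               (* i-th argument (0 if out of range) *)
| PComp : prf -> list prf -> prf
| PPrec : prf -> prf -> prf
| PMu   : prf -> prf.

Inductive eval : prf -> list nat -> nat -> Prop :=
| eZero v : eval PZero v 0
| eSucc x v : eval PSucc (x :: v) (S x)
| eProj i v : eval (PProj i) v (nth i v 0)
| eComp f gs v ys y : evals gs v ys -> eval f ys y -> eval (PComp f gs) v y
| ePrec0 f g v y : eval f v y -> eval (PPrec f g) (0 :: v) y
| ePrecS f g n v r y :
    eval (PPrec f g) (n :: v) r -> eval g (n :: r :: v) y ->
    eval (PPrec f g) (S n :: v) y
| eMu f v n :
    eval f (n :: v) 0 ->
    (forall m, m < n -> exists k, k <> 0 /\ eval f (m :: v) k) ->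
    eval (PMu f) v n
with evals : list prf -> list nat -> list nat -> Prop :=
| esNil v : evals [] v []
| esCons g gs v y ys : eval g v y -> evals gs v ys -> evals (g :: gs) v (y :: ys).

Definition npair (x y : nat) : nat := (x + y) * (x + y + 1) / 2 + y.

Fixpoint bcode (s : list bool) : nat :=
  match s with
  | [] => 0
  | b :: s' => 2 * bcode s' + 1 + (if b then 1 else 0)
  end.

Record computable_poset (D : Type) (lt : D -> D -> Prop) (rho : nat -> D) : Prop := {
  cp_irrefl : forall x, ~ lt x x;
  cp_trans : forall x y z, lt x y -> lt y z -> lt x z;
  cp_inj : forall m n, rho m = rho n -> m = n;
  cp_surj : forall d, exists n, rho n = d;
  cp_dec : exists e : prf, forall m n,
      (lt (rho m) (rho n) -> eval e [npair m n] 1) /\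
      (~ lt (rho m) (rho n) -> eval e [npair m n] 0)
}.

(** Partial functions are represented as option-valued functions.
    f : {0,1}^* x N -> D is partial computable iff rho^{-1} o f is
    computed by some mu-recursive term (on the coded input). *)
Definition pc2 {D : Type} (rho : nat -> D)
  (f : list bool -> nat -> option D) : Prop :=
  exists e : prf, forall p t n,
    eval e [npair (bcode p) t] n <-> f p t = Some (rho n).

Definition monotone2 {D : Type} (lt : D -> D -> Prop)
  (f : list bool -> nat -> option D) : Prop :=
  forall p t t' d d', t <= t' -> f p t = Some d -> f p t' = Some d' ->
    d = d' \/ lt d d'.

Definition is_maxD {D : Type} (lt : D -> D -> Prop)
  (f : list bool -> nat -> option D) (F : list bool -> option D) : Prop :=
  forall p d, F p = Some d <->
    ((exists l : list D, forall d', (exists t, f p t = Some d') <-> In d' l) /\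
     (exists t, f p t = Some d) /\
     (forall d', (exists t, f p t = Some d') -> d' = d \/ lt d' d)).

Definition MaxPR {D : Type} (lt : D -> D -> Prop) (rho : nat -> D)
  (F : list bool -> option D) : Prop :=
  exists f, pc2 rho f /\ monotone2 lt f /\ is_maxD lt f F.

Definition KC {D : Type} (phi : list bool -> option D) (d : D) (k : nat) : Prop :=
  (exists p, phi p = Some d /\ length p = k) /\
  (forall p, phi p = Some d -> k <= length p).

From Stdlib Require Import Arith List.
From Stdlib Require Import Lia Classical ClassicalEpsilon.
Import ListNotations.

(* The universal function works on inputs [1^n 0 p].  Evaluation of mu-recursive programs is
   reduced to a primitive recursive test: a judgement "program [n] on [(p, s)] yields [y]" holds
   iff it heads a valid derivation trace, and validity of a trace is decidable by a mu-recursive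
   program.  At stage [t], the universal function outputs [y] when [t] is a valid trace of [n] on
   some [(p, s)] whose input [s] and output [y] dominate those of every valid trace numbered below
   [t].  This makes it monotone in [t]; and since the dominating traces are cofinal among the
   traces of [n] on [p], its maximum equals the maximum of the function computed by [n], so
   [U(1^(code e) 0 p) = F(p)] at the cost of [code e + 1] extra bits. *)

Fixpoint eval_det e v y (H : eval e v y) {struct H} : forall y', eval e v y' -> y = y'
with evals_det gs v ys (H : evals gs v ys) {struct H} : forall ys', evals gs v ys' -> ys = ys'.
Proof.
- destruct H as [v|x v|i v|f gs v ys y Hs Hf|f g v y Hf|f g n v r y Hr Hg|f v n H0 Hall];
  intros y' H'; inversion H'; subst; try reflexivity.
  + assert (ys = ys0) by (eapply evals_det; eauto). subst. eapply eval_det; eauto.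
  + eapply eval_det; eauto.
  + assert (r = r0) by (eapply eval_det; eauto). subst. eapply eval_det; eauto.
  + match goal with Hb : forall m, m < y' -> _ |- _ => rename Hb into Hall' end.
    destruct (lt_eq_lt_dec n y') as [[Hl|He]|Hl]; auto.
    * destruct (Hall' n Hl) as [k [Hk Hk']]. exfalso. apply Hk. symmetry. exact (eval_det _ _ _ H0 _ Hk').
    * destruct (Hall y' Hl) as [k [Hk Hk']]. exfalso. apply Hk.
      match goal with Hz : eval f (y' :: v) 0 |- _ => exact (eval_det _ _ _ Hk' _ Hz) end.
- destruct H as [v|g gs v y ys Hg Hs]; intros ys' H'; inversion H'; subst; auto.
  f_equal; [eapply eval_det|eapply evals_det]; eauto.
Qed.

(** * Programs computing total functions *)

Definition arg (j : nat) (v : list nat) : nat := nth j v 0.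
Definition computes (e : prf) (F : list nat -> nat) : Prop := forall v, eval e v (F v).

Lemma computes_ext e F G : computes e F -> (forall v, F v = G v) -> computes e G.
Proof. intros H E v. rewrite <- E. apply H. Qed.

Lemma computes_zero : computes PZero (fun _ => 0).
Proof. intro v. constructor. Qed.

Lemma computes_proj j : computes (PProj j) (arg j).
Proof. intro v. constructor. Qed.

Lemma evals_map gs Gs : Forall2 computes gs Gs -> forall v, evals gs v (map (fun G => G v) Gs).
Proof. induction 1; intro v; simpl; constructor; auto. Qed.

Lemma computes_comp f F gs Gs : computes f F -> Forall2 computes gs Gs ->
  computes (PComp f gs) (fun v => F (map (fun G => G v) Gs)).
Proof. intros Hf Hg v. econstructor. apply evals_map; eauto. apply Hf. Qed.

Definition prec_fun (F G : list nat -> nat) (x : nat) (w : list nat) : nat :=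
  nat_rect (fun _ => nat) (F w) (fun n r => G (n :: r :: w)) x.

Lemma eval_prec f g F G : computes f F -> computes g G -> forall x w, eval (PPrec f g) (x :: w) (prec_fun F G x w).
Proof. intros Hf Hg x w. induction x; simpl. constructor; apply Hf. econstructor. apply IHx. apply Hg. Qed.

Definition wrap (k : nat) (p : prf) : prf := PComp p (map PProj (seq 0 k)).

Lemma map_arg_seq k v : map (fun G => G v) (map (fun j => arg j) (seq 0 k)) = map (fun j => arg j v) (seq 0 k).
Proof. rewrite map_map. reflexivity. Qed.

Lemma computes_prec k f g F G : computes f F -> computes g G ->
  computes (wrap (S k) (PPrec f g)) (fun v => prec_fun F G (arg 0 v) (map (fun j => arg j v) (seq 1 k))).
Proof.
  intros Hf Hg v. unfold wrap. econstructor.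
  - assert (Forall2 computes (map PProj (seq 0 (S k))) (map (fun j => arg j) (seq 0 (S k)))).
    { induction (seq 0 (S k)); simpl; constructor; auto. apply computes_proj. }
    pose proof (evals_map _ _ H v). rewrite map_arg_seq in H0. exact H0.
  - simpl. rewrite <- seq_shift, map_map. apply eval_prec; auto.
Qed.

Lemma computes_mu f F M : computes f F ->
  (forall v, F (M v :: v) = 0 /\ forall m, m < M v -> F (m :: v) <> 0) -> computes (PMu f) M.
Proof.
  intros Hf HM v. destruct (HM v) as [H1 H2]. constructor.
  - rewrite <- H1. apply Hf.
  - intros m Hm. exists (F (m :: v)). split; auto.
Qed.

Lemma computes_det e F v n : computes e F -> eval e v n -> n = F v.
Proof. intros H H'. eapply eval_det; eauto. Qed.

Ltac synth := match goal with
 | |- computes (PComp _ _) _ => eapply computes_comp; [synth | synths]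
 | |- computes (PProj _) _ => apply computes_proj
 | |- computes PZero _ => apply computes_zero
 | |- computes _ _ => solve [eauto with computes]
 end
with synths := match goal with
 | |- Forall2 computes [] _ => constructor
 | |- Forall2 computes (_ :: _) _ => constructor; [synth | synths]
 end.

Create HintDb computes.

Ltac solve_computes d := unfold d; eapply computes_ext; [synth | intro v; unfold arg; cbn [map nth seq]].

Definition p_S := PComp PSucc [PProj 0].
Lemma computes_succ : computes p_S (fun v => S (arg 0 v)).
Proof. intro v. econstructor. repeat constructor. constructor. Qed.
#[export] Hint Resolve computes_succ : computes.

Definition p_add := wrap 2 (PPrec (PProj 0) (PComp p_S [PProj 1])).
Lemma computes_add : computes p_add (fun v => arg 0 v + arg 1 v).
Proof. eapply computes_ext. apply computes_prec; synth. intro v. cbn [map seq nth].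
  unfold prec_fun. induction (arg 0 v); simpl; auto. Qed.
#[export] Hint Resolve computes_add : computes.

Definition p_mul := wrap 2 (PPrec PZero (PComp p_add [PProj 1; PProj 2])).
Lemma computes_mul : computes p_mul (fun v => arg 0 v * arg 1 v).
Proof. eapply computes_ext. apply computes_prec; synth. intro v. cbn [map seq nth].
  unfold prec_fun. induction (arg 0 v); simpl; auto. rewrite IHn. unfold arg; simpl. lia. Qed.
#[export] Hint Resolve computes_mul : computes.

Definition p_pred := wrap 1 (PPrec PZero (PProj 0)).
Lemma computes_pred : computes p_pred (fun v => pred (arg 0 v)).
Proof. eapply computes_ext. apply computes_prec; synth. intro v. cbn [map seq nth].
  unfold prec_fun. destruct (arg 0 v); simpl; auto. Qed.
#[export] Hint Resolve computes_pred : computes.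

Definition p_sub := PComp (wrap 2 (PPrec (PProj 0) (PComp p_pred [PProj 1]))) [PProj 1; PProj 0].
Lemma computes_sub : computes p_sub (fun v => arg 0 v - arg 1 v).
Proof. eapply computes_ext. eapply computes_comp. apply computes_prec; synth. synths.
  intro v. unfold arg; cbn [map seq nth]. unfold prec_fun.
  simpl. induction (nth 1 v 0); simpl. lia. rewrite IHn. lia. Qed.
#[export] Hint Resolve computes_sub : computes.

Definition sg (n : nat) : nat := match n with 0 => 0 | S _ => 1 end.
Definition nsg (n : nat) : nat := match n with 0 => 1 | S _ => 0 end.
Definition p_one := PComp p_S [PZero].
Lemma computes_one : computes p_one (fun _ => 1).
Proof. solve_computes p_one. reflexivity. Qed.
#[export] Hint Resolve computes_one : computes.

Definition p_sg := wrap 1 (PPrec PZero p_one).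
Lemma computes_sg : computes p_sg (fun v => sg (arg 0 v)).
Proof. eapply computes_ext. apply computes_prec; synth. intro v. cbn [map seq nth].
  unfold prec_fun. destruct (arg 0 v); simpl; auto. Qed.
#[export] Hint Resolve computes_sg : computes.

Definition p_nsg := wrap 1 (PPrec p_one PZero).
Lemma computes_nsg : computes p_nsg (fun v => nsg (arg 0 v)).
Proof. eapply computes_ext. apply computes_prec; synth. intro v. cbn [map seq nth].
  unfold prec_fun. destruct (arg 0 v); simpl; auto. Qed.
#[export] Hint Resolve computes_nsg : computes.

Definition b2n (b : bool) : nat := if b then 1 else 0.

Definition p_eq := PComp p_nsg [PComp p_add [p_sub; PComp p_sub [PProj 1; PProj 0]]].
Lemma computes_eq : computes p_eq (fun v => b2n (arg 0 v =? arg 1 v)).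
Proof. solve_computes p_eq. destruct (Nat.eqb_spec (nth 0 v 0) (nth 1 v 0)).
  rewrite e. replace (_ - _ + _) with 0 by lia. reflexivity.
  destruct (nth 0 v 0 - nth 1 v 0 + (nth 1 v 0 - nth 0 v 0)) eqn:E. lia. reflexivity. Qed.
#[export] Hint Resolve computes_eq : computes.

Definition p_lt := PComp p_sg [PComp p_sub [PProj 1; PProj 0]].
Lemma computes_lt : computes p_lt (fun v => b2n (arg 0 v <? arg 1 v)).
Proof. solve_computes p_lt. destruct (Nat.ltb_spec (nth 0 v 0) (nth 1 v 0)).
  destruct (nth 1 v 0 - nth 0 v 0) eqn:E. lia. reflexivity.
  replace (_ - _) with 0 by lia. reflexivity. Qed.
#[export] Hint Resolve computes_lt : computes.

Definition p_le := PComp p_nsg [p_sub].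
Lemma computes_le : computes p_le (fun v => b2n (arg 0 v <=? arg 1 v)).
Proof. solve_computes p_le. destruct (Nat.leb_spec (nth 0 v 0) (nth 1 v 0)).
  replace (_ - _) with 0 by lia. reflexivity.
  destruct (nth 0 v 0 - nth 1 v 0) eqn:E. lia. reflexivity. Qed.
#[export] Hint Resolve computes_le : computes.

Definition band x y := sg (x * y).
Definition bor x y := sg (x + y).
Definition p_and := PComp p_sg [p_mul].
Lemma computes_and : computes p_and (fun v => band (arg 0 v) (arg 1 v)).
Proof. solve_computes p_and. reflexivity. Qed.
#[export] Hint Resolve computes_and : computes.

Definition p_or := PComp p_sg [p_add].
Lemma computes_or : computes p_or (fun v => bor (arg 0 v) (arg 1 v)).
Proof. solve_computes p_or. reflexivity. Qed.
#[export] Hint Resolve computes_or : computes.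

Definition ite (c x y : nat) := match c with 0 => y | S _ => x end.
Definition p_ite := PComp p_add [PComp p_mul [PComp p_sg [PProj 0]; PProj 1];
                                 PComp p_mul [PComp p_nsg [PProj 0]; PProj 2]].
Lemma computes_ite : computes p_ite (fun v => ite (arg 0 v) (arg 1 v) (arg 2 v)).
Proof. solve_computes p_ite. destruct (nth 0 v 0); simpl; lia. Qed.
#[export] Hint Resolve computes_ite : computes.

Lemma band_nz x y : band x y <> 0 <-> x <> 0 /\ y <> 0.
Proof. unfold band. destruct (x * y) eqn:E; simpl; split; intros; try lia.
  all: try (apply Nat.mul_eq_0 in E; tauto).
  all: split; intros ->; [rewrite Nat.mul_0_l in E | rewrite Nat.mul_0_r in E]; discriminate. Qed.

Lemma bor_nz x y : bor x y <> 0 <-> x <> 0 \/ y <> 0.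
Proof. unfold bor. destruct x, y; simpl; split; intros; try lia; discriminate. Qed.

Lemma sg_nz x : sg x <> 0 <-> x <> 0.
Proof. destruct x; simpl; split; intros; try lia; discriminate. Qed.

Lemma nsg_nz x : nsg x <> 0 <-> x = 0.
Proof. destruct x; simpl; split; intros; try lia; discriminate. Qed.

Lemma b2n_nz b : b2n b <> 0 <-> b = true.
Proof. destruct b; simpl; split; intros; try lia; discriminate. Qed.

(** * Cantor pairing and coded lists *)

Fixpoint tri (n : nat) : nat := match n with 0 => 0 | S m => tri m + S m end.
Lemma tri2 n : 2 * tri n = n * (n + 1).
Proof. induction n; simpl tri; [reflexivity|]. rewrite Nat.mul_add_distr_l, IHn. nia. Qed.

Lemma npair_tri x y : npair x y = tri (x + y) + y.
Proof. unfold npair. f_equal. rewrite <- tri2. rewrite Nat.mul_comm. apply Nat.div_mul. lia. Qed.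

Lemma tri_mono n m : n <= m -> tri n <= tri m.
Proof. induction 1; simpl; lia. Qed.

Fixpoint unp (z : nat) : nat * nat :=
  match z with 0 => (0, 0)
  | S z' => let (x, y) := unp z' in match x with 0 => (S y, 0) | S x' => (x', S y) end end.
Definition cfst z := fst (unp z).
Definition csnd z := snd (unp z).
Lemma pair_fs z : npair (cfst z) (csnd z) = z.
Proof. unfold cfst, csnd. induction z. reflexivity. simpl. destruct (unp z) as [x y]; simpl in *.
  rewrite npair_tri in *. destruct x; simpl in *.
  - replace (y + 0) with y by lia. lia.
  - replace (x + S y) with (S (x + y)) by lia. simpl. lia. Qed.

Lemma npair_inj x y x' y' : npair x y = npair x' y' -> x = x' /\ y = y'.
Proof. rewrite !npair_tri. intro H.
  assert (x + y = x' + y').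
  { destruct (lt_eq_lt_dec (x+y) (x'+y')) as [[Hl|He]|Hl]; auto.
    - pose proof (tri_mono (S (x+y)) (x'+y') Hl). simpl in H0. lia.
    - pose proof (tri_mono (S (x'+y')) (x+y) Hl). simpl in H0. lia. }
  rewrite H0 in H. split; lia. Qed.

Lemma fst_pair x y : cfst (npair x y) = x.
Proof. destruct (npair_inj _ _ _ _ (pair_fs (npair x y))). auto. Qed.

Lemma snd_pair x y : csnd (npair x y) = y.
Proof. destruct (npair_inj _ _ _ _ (pair_fs (npair x y))). auto. Qed.

Lemma csnd_le z : csnd z <= z.
Proof. rewrite <- (pair_fs z) at 2. rewrite npair_tri. lia. Qed.

Definition p_tri := wrap 1 (PPrec PZero (PComp p_add [PProj 1; PComp p_S [PProj 0]])).
Lemma computes_tri : computes p_tri (fun v => tri (arg 0 v)).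
Proof. eapply computes_ext. apply computes_prec; synth. intro v. unfold arg; cbn [map seq nth].
  unfold prec_fun. simpl. induction (nth 0 v 0); simpl; auto. Qed.
#[export] Hint Resolve computes_tri : computes.

Definition p_pair := PComp p_add [PComp p_tri [p_add]; PProj 1].
Lemma computes_pair : computes p_pair (fun v => npair (arg 0 v) (arg 1 v)).
Proof. solve_computes p_pair. rewrite npair_tri. reflexivity. Qed.
#[export] Hint Resolve computes_pair : computes.

Definition diag z := cfst z + csnd z.
Lemma diag_spec z : tri (diag z) <= z < tri (S (diag z)).
Proof. unfold diag. pose proof (pair_fs z) as H. rewrite npair_tri in H. simpl. lia. Qed.

Definition p_diag := PMu (PComp p_nsg [PComp p_lt [PProj 1; PComp p_tri [PComp p_S [PProj 0]]]]).
Lemma computes_diag : computes p_diag (fun v => diag (arg 0 v)).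
Proof. unfold p_diag. eapply computes_mu. synth. intro v. unfold arg; cbn [map nth].
  pose proof (diag_spec (nth 0 v 0)). split.
  - destruct (Nat.ltb_spec (nth 0 v 0) (tri (S (diag (nth 0 v 0))))). reflexivity. lia.
  - intros m Hm. destruct (Nat.ltb_spec (nth 0 v 0) (tri (S m))). 2: simpl; discriminate.
    pose proof (tri_mono (S m) (diag (nth 0 v 0)) Hm). lia. Qed.
#[export] Hint Resolve computes_diag : computes.

Definition p_snd := PComp p_sub [PProj 0; PComp p_tri [p_diag]].
Lemma computes_snd : computes p_snd (fun v => csnd (arg 0 v)).
Proof. solve_computes p_snd. set (z := nth 0 v 0). unfold diag. pose proof (pair_fs z) as H. rewrite npair_tri in H. lia. Qed.
#[export] Hint Resolve computes_snd : computes.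

Definition p_fst := PComp p_sub [p_diag; p_snd].
Lemma computes_fst : computes p_fst (fun v => cfst (arg 0 v)).
Proof. solve_computes p_fst. unfold diag. lia. Qed.
#[export] Hint Resolve computes_fst : computes.

Definition ccons x l := S (npair x l).
Definition chd z := cfst (pred z).
Definition ctl z := csnd (pred z).
Fixpoint lcode (l : list nat) : nat := match l with [] => 0 | x :: l' => ccons x (lcode l') end.
Definition ctlN n z := Nat.iter n ctl z.
Definition cnth i z := chd (ctlN i z).

Lemma chd_cons x l : chd (ccons x l) = x.
Proof. unfold chd, ccons. simpl. apply fst_pair. Qed.

Lemma ctl_cons x l : ctl (ccons x l) = l.
Proof. unfold ctl, ccons. simpl. apply snd_pair. Qed.

Lemma ctlN_S n z : ctlN (S n) z = ctlN n (ctl z).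
Proof. unfold ctlN. apply Nat.iter_succ_r. Qed.

Lemma ctlN_0 n : ctlN n 0 = 0.
Proof. induction n; simpl; auto. unfold ctlN in *; simpl; rewrite IHn; reflexivity. Qed.

Lemma cnth_lcode l i : cnth i (lcode l) = nth i l 0.
Proof. revert i; induction l; intro i; unfold cnth in *.
  - rewrite ctlN_0. destruct i; reflexivity.
  - destruct i; simpl lcode. unfold ctlN; simpl. apply chd_cons.
    rewrite ctlN_S, ctl_cons. apply IHl. Qed.

Lemma ctlN_lcode l m : ctlN m (lcode l) = lcode (skipn m l).
Proof. revert m; induction l; intro m. rewrite ctlN_0. destruct m; reflexivity.
  destruct m. reflexivity. rewrite ctlN_S. simpl lcode. rewrite ctl_cons. apply IHl. Qed.

Lemma ccons_eq x l x' l' : ccons x l = ccons x' l' -> x = x' /\ l = l'.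
Proof. unfold ccons. intro H. injection H. apply npair_inj. Qed.

Lemma lcode_inj l l' : lcode l = lcode l' -> l = l'.
Proof. revert l'; induction l; destruct l'; simpl; intro H; try discriminate; auto.
  apply ccons_eq in H. destruct H. f_equal; auto. Qed.

Fixpoint ldecF (f z : nat) : list nat :=
  match f with 0 => [] | S f' => match z with 0 => [] | S w => cfst w :: ldecF f' (csnd w) end end.
Definition ldec z := ldecF z z.
Lemma ldecF_ok f z : z <= f -> lcode (ldecF f z) = z.
Proof. revert z; induction f; intros z Hz. destruct z; [reflexivity|lia].
  destruct z. reflexivity. simpl. unfold ccons. rewrite IHf. f_equal. apply pair_fs.
  pose proof (csnd_le z). lia. Qed.

Lemma ldec_ok z : lcode (ldec z) = z.
Proof. apply ldecF_ok. lia. Qed.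

Definition clen z := length (ldec z).
Lemma clen_lcode l : clen (lcode l) = length l.
Proof. unfold clen. f_equal. apply lcode_inj. apply ldec_ok. Qed.

Definition p_hd := PComp p_fst [p_pred].
Lemma computes_hd : computes p_hd (fun v => chd (arg 0 v)).
Proof. solve_computes p_hd. reflexivity. Qed.
#[export] Hint Resolve computes_hd : computes.

Definition p_tl := PComp p_snd [p_pred].
Lemma computes_tl : computes p_tl (fun v => ctl (arg 0 v)).
Proof. solve_computes p_tl. reflexivity. Qed.
#[export] Hint Resolve computes_tl : computes.

Definition p_cons := PComp p_S [p_pair].
Lemma computes_cons : computes p_cons (fun v => ccons (arg 0 v) (arg 1 v)).
Proof. solve_computes p_cons. reflexivity. Qed.
#[export] Hint Resolve computes_cons : computes.

Definition p_tlN := wrap 2 (PPrec (PProj 0) (PComp p_tl [PProj 1])).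
Lemma computes_tlN : computes p_tlN (fun v => ctlN (arg 0 v) (arg 1 v)).
Proof. eapply computes_ext. apply computes_prec; synth. intro v. unfold arg; cbn [map seq nth].
  unfold prec_fun. simpl. induction (nth 0 v 0); simpl; auto. Qed.
#[export] Hint Resolve computes_tlN : computes.

Definition p_nth := PComp p_hd [p_tlN].
Lemma computes_nth : computes p_nth (fun v => cnth (arg 0 v) (arg 1 v)).
Proof. solve_computes p_nth. reflexivity. Qed.
#[export] Hint Resolve computes_nth : computes.

Definition p_len := PMu (PComp p_sg [PComp p_tlN [PProj 0; PProj 1]]).
Lemma computes_len : computes p_len (fun v => clen (arg 0 v)).
Proof. unfold p_len. eapply computes_mu. synth. intro v. unfold arg; cbn [map nth].
  set (z := nth 0 v 0). rewrite <- (ldec_ok z). rewrite clen_lcode. split.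
  - rewrite ctlN_lcode, skipn_all. reflexivity.
  - intros m Hm. rewrite ctlN_lcode. destruct (skipn m (ldec z)) eqn:E. 
    apply (f_equal (@length nat)) in E. rewrite length_skipn in E. simpl in E. lia.
    simpl. discriminate. Qed.
#[export] Hint Resolve computes_len : computes.

(** * Bounded quantifiers *)

Definition bexN (n : nat) (h : nat -> nat) : nat := nat_rect (fun _ => nat) 0 (fun m r => bor r (h m)) n.
Definition bfaN (n : nat) (h : nat -> nat) : nat := nat_rect (fun _ => nat) 1 (fun m r => band r (h m)) n.

Lemma bexN_nz n h : bexN n h <> 0 <-> exists m, m < n /\ h m <> 0.
Proof. induction n; simpl. split; [lia|]. intros [m [Hm _]]; lia.
  fold (bexN n h). rewrite bor_nz, IHn. split.
  - intros [[m [Hm Hh]]|Hh]; exists m || exists n; split; auto; lia.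
  - intros [m [Hm Hh]]. destruct (Nat.eq_dec m n). subst; auto. left; exists m; split; auto; lia. Qed.

Lemma bfaN_nz n h : bfaN n h <> 0 <-> forall m, m < n -> h m <> 0.
Proof. induction n; simpl. split; intros; [lia|discriminate].
  fold (bfaN n h). rewrite band_nz, IHn. split.
  - intros [H1 H2] m Hm. destruct (Nat.eq_dec m n). subst; auto. apply H1; lia.
  - intros H; split; auto. Qed.

Lemma map_nth_seq (w : list nat) : map (fun j => nth j w 0) (seq 0 (length w)) = w.
Proof. induction w; simpl; auto. f_equal. rewrite <- seq_shift, map_map. simpl. auto. Qed.

Definition quant_args k := PProj 0 :: map (fun j => PProj (2 + j)) (seq 0 k).
Lemma quant_args_computes k : Forall2 computes (quant_args k) (arg 0 :: map (fun j => arg (2 + j)) (seq 0 k)).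
Proof. unfold quant_args. constructor. apply computes_proj. induction (seq 0 k); simpl; constructor; auto. apply computes_proj. Qed.

Lemma quant_args_eval k n r v :
  map (fun G => G (n :: r :: map (fun j => arg j v) (seq 1 k))) (arg 0 :: map (fun j => arg (2 + j)) (seq 0 k))
  = n :: map (fun j => arg j v) (seq 1 k).
Proof. simpl. f_equal. rewrite map_map. unfold arg at 1. simpl.
  set (w := map (fun j => arg j v) (seq 1 k)).
  replace k with (length w) at 1 by (unfold w; rewrite length_map, length_seq; auto).
  apply map_nth_seq. Qed.

Lemma prec_fun_bex F G h x w : F w = 0 -> (forall n r, G (n :: r :: w) = bor r (h n)) -> prec_fun F G x w = bexN x h.
Proof. intros H0 H. unfold prec_fun, bexN. induction x; simpl. auto. rewrite H, IHx. reflexivity. Qed.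

Lemma prec_fun_bfa F G h x w : F w = 1 -> (forall n r, G (n :: r :: w) = band r (h n)) -> prec_fun F G x w = bfaN x h.
Proof. intros H0 H. unfold prec_fun, bfaN. induction x; simpl. auto. rewrite H, IHx. reflexivity. Qed.

Lemma quant_args_eval_tail k n r v :
  map (fun G => G (n :: r :: map (fun j => arg j v) (seq 1 k))) (map (fun j => arg (2 + j)) (seq 0 k))
  = map (fun j => arg j v) (seq 1 k).
Proof. pose proof (quant_args_eval k n r v). simpl in H. injection H. auto. Qed.

Definition pbex k P := wrap (S k) (PPrec PZero (PComp p_or [PProj 1; PComp P (quant_args k)])).
Lemma computes_bex k P PF : computes P PF ->
  computes (pbex k P) (fun v => bexN (arg 0 v) (fun m => PF (m :: map (fun j => arg j v) (seq 1 k)))).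
Proof. intro HP. unfold pbex. eapply computes_ext. apply computes_prec. apply computes_zero.
  eapply computes_comp. apply computes_or. constructor. apply computes_proj. constructor. eapply computes_comp. exact HP.
  apply quant_args_computes. constructor.
  intro v. apply prec_fun_bex. reflexivity. intros n r. cbn [map]. rewrite quant_args_eval_tail. reflexivity. Qed.

Definition pbfa k P := wrap (S k) (PPrec p_one (PComp p_and [PProj 1; PComp P (quant_args k)])).
Lemma computes_bfa k P PF : computes P PF ->
  computes (pbfa k P) (fun v => bfaN (arg 0 v) (fun m => PF (m :: map (fun j => arg j v) (seq 1 k)))).
Proof. intro HP. unfold pbfa. eapply computes_ext. apply computes_prec. apply computes_one.
  eapply computes_comp. apply computes_and. constructor. apply computes_proj. constructor. eapply computes_comp. exact HP.
  apply quant_args_computes. constructor.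
  intro v. apply prec_fun_bfa. reflexivity. intros n r. cbn [map]. rewrite quant_args_eval_tail. reflexivity. Qed.
#[export] Hint Resolve computes_bex computes_bfa : computes.

(** * Checking derivation traces *)

Fixpoint code (e : prf) : nat :=
  match e with
  | PZero => npair 0 0
  | PSucc => npair 1 0
  | PProj i => npair 2 i
  | PComp f gs => npair 3 (npair (code f) (lcode (map code gs)))
  | PPrec f g => npair 4 (npair (code f) (code g))
  | PMu f => npair 5 (code f)
  end.
Lemma code_PZero : code PZero = 0. Proof. reflexivity. Qed.

(* A derivation trace is a coded list of entries [npair J h], where [J = judg (code e) (lcode v) y]
   asserts that [e] on [v] yields [y] and the hint [h] records the intermediate values: the results
   of the argument programs for [PComp], the recursive result for [PPrec], the nonzero values of
   the searched function below [y] for [PMu].  [justified c v y h M] says that the rule for the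
   program coded by [c] yields [y] from premises satisfying [M]; in a valid trace [M] is
   "occurs as the judgement of a later entry". *)
Definition judg c v y := npair c (npair v y).

Definition justified (c v y h : nat) (M : nat -> Prop) : Prop :=
  match cfst c with
  | 0 => y = 0
  | 1 => v <> 0 /\ y = S (chd v)
  | 2 => y = cnth (csnd c) v
  | 3 => clen h = clen (csnd (csnd c)) /\ M (judg (cfst (csnd c)) h y) /\
         forall m, m < clen (csnd (csnd c)) -> M (judg (cnth m (csnd (csnd c))) v (cnth m h))
  | 4 => v <> 0 /\ (chd v = 0 -> M (judg (cfst (csnd c)) (ctl v) y)) /\
         (chd v <> 0 -> M (judg c (ccons (pred (chd v)) (ctl v)) h) /\
                        M (judg (csnd (csnd c)) (ccons (pred (chd v)) (ccons h (ctl v))) y))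
  | 5 => M (judg (csnd c) (ccons y v) 0) /\
         forall m, m < y -> cnth m h <> 0 /\ M (judg (csnd c) (ccons m v) (cnth m h))
  | _ => False
  end.

Lemma justified_mono c v y h (M M' : nat -> Prop) : (forall x, M x -> M' x) -> justified c v y h M -> justified c v y h M'.
Proof. intros HM. unfold justified. destruct (cfst c) as [|[|[|[|[|[|t]]]]]]; auto.
  - intros [H1 [H2 H3]]; repeat split; auto.
  - intros [H1 [H2 H3]]; repeat split; auto; intros; apply HM; apply H3; auto.
  - intros [H1 H2]; split; auto. intros m Hm; destruct (H2 m Hm); split; auto. Qed.


Fixpoint pconst n := match n with 0 => PZero | S m => PComp p_S [pconst m] end.
Lemma computes_const n : computes (pconst n) (fun _ => n).
Proof. induction n. apply computes_zero. simpl. eapply computes_ext. eapply computes_comp. apply computes_succ. constructor. exact IHn. constructor.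
  intro v. reflexivity. Qed.
#[export] Hint Resolve computes_const : computes.

Definition p_bmemb := PComp p_and [PComp p_lt [PProj 2; PProj 0];
   PComp p_eq [PComp p_fst [PComp p_nth [PProj 0; PProj 1]]; PProj 3]].
Lemma computes_bmemb : computes p_bmemb (fun v => band (b2n (arg 2 v <? arg 0 v)) (b2n (cfst (cnth (arg 0 v) (arg 1 v)) =? arg 3 v))).
Proof. solve_computes p_bmemb. reflexivity. Qed.
#[export] Hint Resolve computes_bmemb : computes.

Definition occurs_after L i x := bexN (clen L) (fun k => band (b2n (i <? k)) (b2n (cfst (cnth k L) =? x))).
Definition p_memb := PComp (pbex 3 p_bmemb) [PComp p_len [PProj 0]; PProj 0; PProj 1; PProj 2].
Lemma computes_memb : computes p_memb (fun v => occurs_after (arg 0 v) (arg 1 v) (arg 2 v)).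
Proof. solve_computes p_memb. reflexivity. Qed.
#[export] Hint Resolve computes_memb : computes.

Local Notation judgP x y z := (PComp p_pair [x; PComp p_pair [y; z]]).
Local Notation occursP x := (PComp p_memb [PProj 0; PProj 1; x]).
Local Notation arP := (PComp p_snd [PProj 2]).

Definition p_rule_zero := PComp p_eq [PProj 4; PZero].
Definition rule_zero (L i c v y h : nat) : nat := b2n (y =? 0).
Lemma computes_rule_zero : computes p_rule_zero (fun v => rule_zero (arg 0 v) (arg 1 v) (arg 2 v) (arg 3 v) (arg 4 v) (arg 5 v)).
Proof. solve_computes p_rule_zero. reflexivity. Qed.
#[export] Hint Resolve computes_rule_zero : computes.

Definition p_rule_succ := PComp p_and [PComp p_sg [PProj 3]; PComp p_eq [PProj 4; PComp p_S [PComp p_hd [PProj 3]]]].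
Definition rule_succ (L i c v y h : nat) : nat := band (sg v) (b2n (y =? S (chd v))).
Lemma computes_rule_succ : computes p_rule_succ (fun v => rule_succ (arg 0 v) (arg 1 v) (arg 2 v) (arg 3 v) (arg 4 v) (arg 5 v)).
Proof. solve_computes p_rule_succ. reflexivity. Qed.
#[export] Hint Resolve computes_rule_succ : computes.

Definition p_rule_proj := PComp p_eq [PProj 4; PComp p_nth [arP; PProj 3]].
Definition rule_proj (L i c v y h : nat) : nat := b2n (y =? cnth (csnd c) v).
Lemma computes_rule_proj : computes p_rule_proj (fun v => rule_proj (arg 0 v) (arg 1 v) (arg 2 v) (arg 3 v) (arg 4 v) (arg 5 v)).
Proof. solve_computes p_rule_proj. reflexivity. Qed.
#[export] Hint Resolve computes_rule_proj : computes.

Definition p_comp_arg := PComp p_memb [PProj 1; PProj 2;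
   judgP (PComp p_nth [PProj 0; PProj 3]) (PProj 4) (PComp p_nth [PProj 0; PProj 5])].
Lemma computes_comp_arg : computes p_comp_arg (fun v => occurs_after (arg 1 v) (arg 2 v) (judg (cnth (arg 0 v) (arg 3 v)) (arg 4 v) (cnth (arg 0 v) (arg 5 v)))).
Proof. solve_computes p_comp_arg. reflexivity. Qed.
#[export] Hint Resolve computes_comp_arg : computes.

Local Notation gsP := (PComp p_snd [arP]).
Local Notation f3P := (PComp p_fst [arP]).
Definition p_rule_comp := PComp p_and [PComp p_eq [PComp p_len [PProj 5]; PComp p_len [gsP]];
   PComp p_and [occursP (judgP f3P (PProj 5) (PProj 4));
                PComp (pbfa 5 p_comp_arg) [PComp p_len [gsP]; PProj 0; PProj 1; gsP; PProj 3; PProj 5]]].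
Definition rule_comp (L i c v y h : nat) : nat :=
  band (b2n (clen h =? clen (csnd (csnd c))))
   (band (occurs_after L i (judg (cfst (csnd c)) h y))
     (bfaN (clen (csnd (csnd c))) (fun m => occurs_after L i (judg (cnth m (csnd (csnd c))) v (cnth m h))))).
Lemma computes_rule_comp : computes p_rule_comp (fun v => rule_comp (arg 0 v) (arg 1 v) (arg 2 v) (arg 3 v) (arg 4 v) (arg 5 v)).
Proof. solve_computes p_rule_comp. reflexivity. Qed.
#[export] Hint Resolve computes_rule_comp : computes.

Local Notation hdvP := (PComp p_hd [PProj 3]).
Local Notation tlvP := (PComp p_tl [PProj 3]).
Local Notation nP := (PComp p_pred [hdvP]).
Definition p_rule_prec := PComp p_and [PComp p_sg [PProj 3]; PComp p_ite [hdvP;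
   PComp p_and [occursP (judgP (PProj 2) (PComp p_cons [nP; tlvP]) (PProj 5));
                occursP (judgP (PComp p_snd [arP]) (PComp p_cons [nP; PComp p_cons [PProj 5; tlvP]]) (PProj 4))];
   occursP (judgP f3P tlvP (PProj 4))]].
Definition rule_prec (L i c v y h : nat) : nat :=
  band (sg v) (ite (chd v)
    (band (occurs_after L i (judg c (ccons (pred (chd v)) (ctl v)) h))
          (occurs_after L i (judg (csnd (csnd c)) (ccons (pred (chd v)) (ccons h (ctl v))) y)))
    (occurs_after L i (judg (cfst (csnd c)) (ctl v) y))).
Lemma computes_rule_prec : computes p_rule_prec (fun v => rule_prec (arg 0 v) (arg 1 v) (arg 2 v) (arg 3 v) (arg 4 v) (arg 5 v)).
Proof. solve_computes p_rule_prec. reflexivity. Qed.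
#[export] Hint Resolve computes_rule_prec : computes.

Definition p_mu_below := PComp p_and [PComp p_sg [PComp p_nth [PProj 0; PProj 5]];
   PComp p_memb [PProj 1; PProj 2; judgP (PProj 3) (PComp p_cons [PProj 0; PProj 4]) (PComp p_nth [PProj 0; PProj 5])]].
Lemma computes_mu_below : computes p_mu_below (fun v => band (sg (cnth (arg 0 v) (arg 5 v)))
   (occurs_after (arg 1 v) (arg 2 v) (judg (arg 3 v) (ccons (arg 0 v) (arg 4 v)) (cnth (arg 0 v) (arg 5 v))))).
Proof. solve_computes p_mu_below. reflexivity. Qed.
#[export] Hint Resolve computes_mu_below : computes.

Definition p_rule_mu := PComp p_and [occursP (judgP arP (PComp p_cons [PProj 4; PProj 3]) PZero);
   PComp (pbfa 5 p_mu_below) [PProj 4; PProj 0; PProj 1; arP; PProj 3; PProj 5]].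
Definition rule_mu (L i c v y h : nat) : nat :=
  band (occurs_after L i (judg (csnd c) (ccons y v) 0))
   (bfaN y (fun m => band (sg (cnth m h)) (occurs_after L i (judg (csnd c) (ccons m v) (cnth m h))))).
Lemma computes_rule_mu : computes p_rule_mu (fun v => rule_mu (arg 0 v) (arg 1 v) (arg 2 v) (arg 3 v) (arg 4 v) (arg 5 v)).
Proof. solve_computes p_rule_mu. reflexivity. Qed.
#[export] Hint Resolve computes_rule_mu : computes.

Local Notation tsel j B := (PComp p_mul [PComp p_eq [PComp p_fst [PProj 2]; pconst j]; B]).
Definition p_just_check := PComp p_sg [PComp p_add [tsel 0 p_rule_zero; PComp p_add [tsel 1 p_rule_succ;
  PComp p_add [tsel 2 p_rule_proj; PComp p_add [tsel 3 p_rule_comp; PComp p_add [tsel 4 p_rule_prec; tsel 5 p_rule_mu]]]]]].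
Definition just_check (L i c v y h : nat) : nat :=
  sg (b2n (cfst c =? 0) * rule_zero L i c v y h + (b2n (cfst c =? 1) * rule_succ L i c v y h +
     (b2n (cfst c =? 2) * rule_proj L i c v y h + (b2n (cfst c =? 3) * rule_comp L i c v y h +
     (b2n (cfst c =? 4) * rule_prec L i c v y h + b2n (cfst c =? 5) * rule_mu L i c v y h))))).
Lemma computes_just_check : computes p_just_check (fun v => just_check (arg 0 v) (arg 1 v) (arg 2 v) (arg 3 v) (arg 4 v) (arg 5 v)).
Proof. solve_computes p_just_check. reflexivity. Qed.
#[export] Hint Resolve computes_just_check : computes.

Definition entry_check L i := let E := cnth i L in
  just_check L i (cfst (cfst E)) (cfst (csnd (cfst E))) (csnd (csnd (cfst E))) (csnd E).
Local Notation EP := (PComp p_nth [PProj 1; PProj 0]).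
Definition p_entry_check := PComp p_just_check [PProj 0; PProj 1; PComp p_fst [PComp p_fst [EP]];
  PComp p_fst [PComp p_snd [PComp p_fst [EP]]]; PComp p_snd [PComp p_snd [PComp p_fst [EP]]];
  PComp p_snd [EP]].
Lemma computes_entry_check : computes p_entry_check (fun v => entry_check (arg 0 v) (arg 1 v)).
Proof. solve_computes p_entry_check. reflexivity. Qed.
#[export] Hint Resolve computes_entry_check : computes.

Definition valid_trace L := bfaN (clen L) (fun i => entry_check L i).
Definition p_bv := PComp p_entry_check [PProj 1; PProj 0].
Lemma computes_bv : computes p_bv (fun v => entry_check (arg 1 v) (arg 0 v)).
Proof. solve_computes p_bv. reflexivity. Qed.
#[export] Hint Resolve computes_bv : computes.

Definition p_valid := PComp (pbfa 1 p_bv) [PComp p_len [PProj 0]; PProj 0].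
Lemma computes_valid : computes p_valid (fun v => valid_trace (arg 0 v)).
Proof. solve_computes p_valid. reflexivity. Qed.
#[export] Hint Resolve computes_valid : computes.

(** * Soundness and completeness of the checker *)

Lemma eqb_nz x y : b2n (x =? y) <> 0 <-> x = y.
Proof. rewrite b2n_nz. apply Nat.eqb_eq. Qed.

Lemma just_check_iff L i c v y h :
  just_check L i c v y h <> 0 <-> justified c v y h (fun x => occurs_after L i x <> 0).
Proof. unfold just_check, justified.
  destruct (cfst c) as [|[|[|[|[|[|t]]]]]]; cbn [Nat.eqb b2n];
  rewrite ?Nat.mul_1_l, ?Nat.mul_0_l, ?Nat.add_0_r, ?Nat.add_0_l, ?sg_nz.
  - apply eqb_nz.
  - unfold rule_succ. rewrite band_nz, sg_nz, eqb_nz. tauto.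
  - apply eqb_nz.
  - unfold rule_comp. rewrite !band_nz, eqb_nz, bfaN_nz. tauto.
  - unfold rule_prec. rewrite band_nz, sg_nz. destruct (chd v) eqn:E; simpl ite.
    + split; intros [H1 H2]; repeat split; auto; intros; lia.
    + rewrite band_nz. split; intros [H1 H2]; repeat split; auto; try lia; apply H2; lia.
  - unfold rule_mu. rewrite band_nz, bfaN_nz. setoid_rewrite band_nz. setoid_rewrite sg_nz. tauto.
  - split; [lia|tauto].
Qed.

Lemma occurs_after_nz L i x : occurs_after L i x <> 0 <-> exists k, k < clen L /\ i < k /\ cfst (cnth k L) = x.
Proof. unfold occurs_after. rewrite bexN_nz. setoid_rewrite band_nz. setoid_rewrite b2n_nz.
  setoid_rewrite Nat.ltb_lt. setoid_rewrite Nat.eqb_eq. split; intros [k H]; exists k; tauto. Qed.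

Lemma evals_nth gs v ys : length ys = length gs ->
  (forall m, m < length gs -> eval (nth m gs PZero) v (nth m ys 0)) -> evals gs v ys.
Proof. revert ys; induction gs; intros ys Hl H; destruct ys; simpl in *; try discriminate.
  constructor. constructor. apply (H 0); lia. apply IHgs. lia. intros m Hm. apply (H (S m)); lia. Qed.

Lemma lcode_nonzero vl : lcode vl <> 0 -> exists x w, vl = x :: w.
Proof. destruct vl. simpl; tauto. eauto. Qed.

Definition judged_sound (x : nat) : Prop :=
  forall e vl y, x = judg (code e) (lcode vl) y -> eval e vl y.

Lemma justified_sound e vl y h : justified (code e) (lcode vl) y h judged_sound -> eval e vl y.
Proof.
  unfold judged_sound. intro HJ.
  destruct e as [| |i|f gs|f g|f]; unfold justified in HJ; simpl code in HJ;
    repeat (rewrite fst_pair in HJ || rewrite snd_pair in HJ).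
  - subst; constructor.
  - destruct HJ as [H1 H2]. destruct (lcode_nonzero _ H1) as [x [w ->]]. simpl lcode in H2.
    rewrite chd_cons in H2. subst. constructor.
  - rewrite cnth_lcode in HJ. subst. constructor.
  - destruct HJ as [H1 [H2 H3]]. rewrite <- (ldec_ok h) in *. set (ys := ldec h) in *.
    rewrite !clen_lcode, length_map in *.
    econstructor; [|apply H2; reflexivity].
    apply evals_nth; auto. intros m Hm. apply (H3 m); auto.
    rewrite !cnth_lcode, <- code_PZero, map_nth. reflexivity.
  - destruct HJ as [H1 [H2 H3]]. destruct (lcode_nonzero _ H1) as [x [w ->]]. simpl lcode in *.
    rewrite chd_cons, ctl_cons in *. destruct x as [|n].
    + constructor. apply H2; auto.
    + destruct (H3 ltac:(lia)) as [H4 H5]. simpl pred in *.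
      econstructor; [apply H4; reflexivity|apply H5; reflexivity].
  - destruct HJ as [H1 H2]. constructor; [apply H1; reflexivity|].
    intros m Hm. destruct (H2 m Hm) as [H3 H4]. exists (cnth m h). split; auto.
Qed.

(* Induction on the distance to the end of the trace: premises of an entry occur strictly later. *)
Lemma valid_trace_sound L : valid_trace L <> 0 -> forall k, k < clen L -> judged_sound (cfst (cnth k L)).
Proof.
  intros HV. unfold valid_trace in HV. rewrite bfaN_nz in HV.
  enough (Hgen : forall n k, clen L - k <= n -> k < clen L -> judged_sound (cfst (cnth k L))) by eauto.
  induction n as [|n IH]; intros k Hn Hk e vl y HE; [lia|].
  pose proof (HV k Hk) as HJ. unfold entry_check in HJ. rewrite just_check_iff in HJ.
  rewrite HE in HJ. unfold judg in HJ. repeat (rewrite fst_pair in HJ || rewrite snd_pair in HJ).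
  apply (justified_sound _ _ _ (csnd (cnth k L))).
  eapply justified_mono; [|exact HJ].
  intros x Hx. apply occurs_after_nz in Hx as [k' [H1 [H2 <-]]].
  apply IH; [lia|exact H1].
Qed.

Section EvalInd.
Variable P : prf -> list nat -> nat -> Prop.
Hypothesis HZ : forall v, P PZero v 0.
Hypothesis HS : forall x v, P PSucc (x :: v) (S x).
Hypothesis HP : forall i v, P (PProj i) v (nth i v 0).
Hypothesis HC : forall f gs v ys y, length ys = length gs ->
  (forall m, m < length gs -> P (nth m gs PZero) v (nth m ys 0)) -> P f ys y -> P (PComp f gs) v y.
Hypothesis HP0 : forall f g v y, P f v y -> P (PPrec f g) (0 :: v) y.
Hypothesis HPS : forall f g n v r y, P (PPrec f g) (n :: v) r -> P g (n :: r :: v) y -> P (PPrec f g) (S n :: v) y.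
Hypothesis HM : forall f v n, P f (n :: v) 0 ->
  (forall m, m < n -> exists k, k <> 0 /\ P f (m :: v) k) -> P (PMu f) v n.

Fixpoint eval_ind_nth e v y (H : eval e v y) {struct H} : P e v y
with evals_ind_nth gs v ys (H : evals gs v ys) {struct H} :
  length ys = length gs /\ forall m, m < length gs -> P (nth m gs PZero) v (nth m ys 0).
Proof.
- destruct H as [v|x v|i v|f gs v ys y Hs Hf|f g v y Hf|f g n v r y Hr Hg|f v n H0 Hall].
  + apply HZ.
  + apply HS.
  + apply HP.
  + destruct (evals_ind_nth _ _ _ Hs) as [H1 H2]. apply (HC f gs v ys y); auto.
  + apply HP0; auto.
  + eapply HPS; eauto.
  + apply HM. apply eval_ind_nth; auto.
    intros m Hm. destruct (Hall m Hm) as [k [Hk Hev]]. exists k. split; auto.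
- destruct H as [v|g gs v y ys Hg Hs].
  + split; auto. simpl; intros; lia.
  + destruct (evals_ind_nth _ _ _ Hs) as [H1 H2]. split. simpl; auto.
    intros [|m] Hm; simpl. apply eval_ind_nth; auto. apply H2. simpl in Hm; lia.
Qed.
End EvalInd.

Definition entry_justified E M := justified (cfst (cfst E)) (cfst (csnd (cfst E))) (csnd (csnd (cfst E))) (csnd E) M.
Definition judged (Ls : list nat) x := exists k, k < length Ls /\ cfst (nth k Ls 0) = x.
Definition justified_list Ls := forall i, i < length Ls -> entry_justified (nth i Ls 0) (judged (skipn (S i) Ls)).

Lemma justified_list_nil : justified_list []. Proof. intros i H; simpl in H; lia. Qed.

Lemma justified_list_cons x L : entry_justified x (judged L) -> justified_list L -> justified_list (x :: L).
Proof. intros H1 H2 [|i] Hi; simpl; auto. apply H2. simpl in Hi; lia. Qed.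

Lemma judged_app_l L1 L2 x : judged L1 x -> judged (L1 ++ L2) x.
Proof. intros [k [H1 H2]]. exists k. rewrite length_app, app_nth1; auto. split; auto; lia. Qed.

Lemma judged_app_r L1 L2 x : judged L2 x -> judged (L1 ++ L2) x.
Proof. intros [k [H1 H2]]. exists (length L1 + k). rewrite length_app, app_nth2 by lia.
  replace (length L1 + k - length L1) with k by lia. split; auto; lia. Qed.

Lemma judged_hd z L : judged (z :: L) (cfst z).
Proof. exists 0. simpl. split; auto; lia. Qed.

Lemma justified_list_app L1 L2 : justified_list L1 -> justified_list L2 -> justified_list (L1 ++ L2).
Proof. intros H1 H2 i Hi. rewrite length_app in Hi. destruct (Nat.lt_ge_cases i (length L1)).
  - rewrite app_nth1 by auto. eapply justified_mono; [|apply H1; auto].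
    intros x Hx. rewrite skipn_app. replace (S i - length L1) with 0 by lia. simpl. apply judged_app_l; auto.
  - rewrite app_nth2 by auto. eapply justified_mono; [|apply H2; lia].
    intros x Hx. rewrite skipn_app. rewrite skipn_all2 by lia. rewrite app_nil_l.
    replace (S i - length L1) with (S (i - length L1)) by lia. auto. Qed.

Lemma merge_justified (X : nat -> nat) N : (forall m, m < N -> exists Ls, justified_list Ls /\ judged Ls (X m)) ->
  exists Ls, justified_list Ls /\ forall m, m < N -> judged Ls (X m).
Proof. induction N; intros H. exists []. split. apply justified_list_nil. intros; lia.
  destruct IHN as [L1 [G1 I1]]. intros; apply H; lia.
  destruct (H N) as [L2 [G2 I2]]. lia. exists (L1 ++ L2). split. apply justified_list_app; auto.
  intros m Hm. destruct (Nat.eq_dec m N). subst. apply judged_app_r; auto. apply judged_app_l. apply I1; lia. Qed.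

Lemma choice_list (Q : nat -> nat -> Prop) N : (forall m, m < N -> exists k, Q m k) ->
  exists l, length l = N /\ forall m, m < N -> Q m (nth m l 0).
Proof. induction N; intros H. exists []. split; auto. intros; lia.
  destruct IHN as [l [H1 H2]]. intros; apply H; lia.
  destruct (H N) as [k Hk]. lia. exists (l ++ [k]). split. rewrite length_app; simpl; lia.
  intros m Hm. destruct (Nat.eq_dec m N). subst. rewrite app_nth2 by lia. rewrite Nat.sub_diag. auto.
  rewrite app_nth1 by lia. apply H2; lia. Qed.

Definition derivable e v y := exists Ls, justified_list Ls /\ exists h Ls', Ls = npair (judg (code e) (lcode v) y) h :: Ls'.

Lemma derivable_judged e v y : derivable e v y -> exists Ls, justified_list Ls /\ judged Ls (judg (code e) (lcode v) y).
Proof. intros [Ls [G [h [Ls' ->]]]]. exists (npair (judg (code e) (lcode v) y) h :: Ls'). split; auto.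
  pose proof (judged_hd (npair (judg (code e) (lcode v) y) h) Ls'). rewrite fst_pair in H. auto. Qed.

Ltac jsimp := unfold entry_justified, justified, judg; repeat (rewrite fst_pair || rewrite snd_pair); simpl code;
  repeat (rewrite fst_pair || rewrite snd_pair); fold judg.

Lemma derivable_comp f gs v ys y : length ys = length gs ->
  (forall m, m < length gs -> derivable (nth m gs PZero) v (nth m ys 0)) -> derivable f ys y ->
  derivable (PComp f gs) v y.
Proof.
  intros Hl Hgs Hf.
  destruct (merge_justified (fun m => judg (code (nth m gs PZero)) (lcode v) (nth m ys 0)) (length gs))
    as [L1 [G1 I1]].
  { intros m Hm. apply derivable_judged. auto. }
  destruct (derivable_judged _ _ _ Hf) as [L2 [G2 I2]].
  exists (npair (judg (code (PComp f gs)) (lcode v) y) (lcode ys) :: L2 ++ L1). split; eauto.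
  apply justified_list_cons; [|apply justified_list_app; auto]. jsimp.
  rewrite !clen_lcode, length_map. split; auto. split; [apply judged_app_l; auto|].
  intros m Hm. apply judged_app_r. rewrite !cnth_lcode, <- code_PZero, map_nth. apply I1; auto.
Qed.

Lemma derivable_prec_succ f g n v r y : derivable (PPrec f g) (n :: v) r ->
  derivable g (n :: r :: v) y -> derivable (PPrec f g) (S n :: v) y.
Proof.
  intros Hr Hg.
  destruct (derivable_judged _ _ _ Hr) as [L1 [G1 I1]].
  destruct (derivable_judged _ _ _ Hg) as [L2 [G2 I2]].
  exists (npair (judg (code (PPrec f g)) (lcode (S n :: v)) y) r :: L1 ++ L2). split; eauto.
  apply justified_list_cons; [|apply justified_list_app; auto]. jsimp.
  simpl lcode. rewrite chd_cons, ctl_cons.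
  split; [unfold ccons; lia|]. split; [intros; lia|]. intros _. simpl pred.
  split; [apply judged_app_l, I1|apply judged_app_r, I2].
Qed.

Lemma derivable_mu f v n : derivable f (n :: v) 0 ->
  (forall m, m < n -> exists k, k <> 0 /\ derivable f (m :: v) k) -> derivable (PMu f) v n.
Proof.
  intros H0 Hall.
  destruct (choice_list (fun m k => k <> 0 /\ derivable f (m :: v) k) n Hall) as [hs [Hl Hhs]].
  destruct (merge_justified (fun m => judg (code f) (lcode (m :: v)) (nth m hs 0)) n) as [L1 [G1 I1]].
  { intros m Hm. apply derivable_judged, Hhs, Hm. }
  destruct (derivable_judged _ _ _ H0) as [L2 [G2 I2]].
  exists (npair (judg (code (PMu f)) (lcode v) n) (lcode hs) :: L2 ++ L1). split; eauto.
  apply justified_list_cons; [|apply justified_list_app; auto]. jsimp.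
  split; [apply judged_app_l, I2|].
  intros m Hm. rewrite cnth_lcode. split; [apply Hhs, Hm|apply judged_app_r, I1, Hm].
Qed.

Lemma eval_derivable e v y : eval e v y -> derivable e v y.
Proof.
  apply eval_ind_nth; clear e v y.
  - intros v. exists [npair (judg (code PZero) (lcode v) 0) 0]. split; eauto.
    apply justified_list_cons; [|apply justified_list_nil]. jsimp. reflexivity.
  - intros x v. exists [npair (judg (code PSucc) (lcode (x :: v)) (S x)) 0]. split; eauto.
    apply justified_list_cons; [|apply justified_list_nil]. jsimp.
    simpl lcode. rewrite chd_cons. split; auto. unfold ccons; lia.
  - intros i v. exists [npair (judg (code (PProj i)) (lcode v) (nth i v 0)) 0]. split; eauto.
    apply justified_list_cons; [|apply justified_list_nil]. jsimp. rewrite cnth_lcode. reflexivity.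
  - apply derivable_comp.
  - intros f g v y Hf. destruct (derivable_judged _ _ _ Hf) as [L1 [G1 I1]].
    exists (npair (judg (code (PPrec f g)) (lcode (0 :: v)) y) 0 :: L1). split; eauto.
    apply justified_list_cons; auto. jsimp. simpl lcode. rewrite chd_cons, ctl_cons.
    split; [unfold ccons; lia|]. split; auto. intros; lia.
  - apply derivable_prec_succ.
  - apply derivable_mu.
Qed.

Lemma justified_list_valid Ls : justified_list Ls -> valid_trace (lcode Ls) <> 0.
Proof. intros G. unfold valid_trace. rewrite bfaN_nz. intros i Hi. rewrite clen_lcode in Hi.
  unfold entry_check. rewrite just_check_iff. rewrite cnth_lcode. eapply justified_mono; [|apply G; auto].
  intros x [k [H1 H2]]. apply occurs_after_nz. exists (S i + k). rewrite clen_lcode, cnth_lcode.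
  rewrite length_skipn in H1. rewrite nth_skipn in H2. split. lia. split. lia. auto. Qed.

Lemma inv_comp f gs v y : eval (PComp f gs) v y -> exists ys, evals gs v ys /\ eval f ys y.
Proof. intro H. inversion H; subst. eauto. Qed.

Lemma inv_cons g gs v ys : evals (g :: gs) v ys -> exists y ys', ys = y :: ys' /\ eval g v y /\ evals gs v ys'.
Proof. intro H. inversion H; subst. eauto. Qed.

Lemma inv_nil v ys : evals [] v ys -> ys = [].
Proof. intro H. inversion H; subst. auto. Qed.

Lemma inv_mu f v n : eval (PMu f) v n -> eval f (n :: v) 0 /\ forall m, m < n -> exists k, k <> 0 /\ eval f (m :: v) k.
Proof. intro H. inversion H; subst. auto. Qed.

Lemma inv_proj i v y : eval (PProj i) v y -> y = nth i v 0.
Proof. intro H. inversion H; subst. auto. Qed.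

(** * The universal program *)

Definition prefix_code n pc := 2 ^ n * (2 * pc + 3) - 2.
Definition p_pow2 := wrap 1 (PPrec p_one (PComp p_add [PProj 1; PProj 1])).
Lemma computes_pow2 : computes p_pow2 (fun v => 2 ^ arg 0 v).
Proof. eapply computes_ext. apply computes_prec; synth. intro v. unfold arg; cbn [map seq nth].
  unfold prec_fun. simpl. induction (nth 0 v 0); simpl; auto. lia. Qed.
#[export] Hint Resolve computes_pow2 : computes.

Definition p_prefix_code := PComp p_sub [PComp p_mul [PComp p_pow2 [PProj 0];
   PComp p_add [PComp p_add [PProj 1; PProj 1]; pconst 3]]; pconst 2].
Lemma computes_prefix_code : computes p_prefix_code (fun v => prefix_code (arg 0 v) (arg 1 v)).
Proof. solve_computes p_prefix_code. unfold prefix_code. f_equal. f_equal. lia. Qed.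
#[export] Hint Resolve computes_prefix_code : computes.

Lemma prefix_code_inj n pc n' pc' : prefix_code n pc = prefix_code n' pc' -> n = n' /\ pc = pc'.
Proof. unfold prefix_code. intro H.
  assert (H0: forall n pc, 2 <= 2 ^ n * (2 * pc + 3)).
  { intros. pose proof (Nat.pow_nonzero 2 n0). nia. }
  assert (E : 2 ^ n * (2 * pc + 3) = 2 ^ n' * (2 * pc' + 3)) by (pose proof (H0 n pc); pose proof (H0 n' pc'); lia).
  clear H H0. revert n' E. induction n; intros n' E; destruct n'; simpl in E.
  - split; auto; lia.
  - exfalso. rewrite Nat.add_0_r in E. lia.
  - exfalso. rewrite Nat.add_0_r in E. lia.
  - rewrite !Nat.add_0_r in E. destruct (IHn n'). nia. auto. Qed.

Lemma bcode_prefix n p : bcode (repeat true n ++ false :: p) = prefix_code n (bcode p).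
Proof. unfold prefix_code. induction n; simpl repeat; simpl app; simpl bcode.
  - simpl. lia.
  - rewrite IHn. rewrite Nat.pow_succ_r'. pose proof (Nat.pow_nonzero 2 n). nia. Qed.

Definition trace_head t := cfst (chd t).
Definition trace_args t := cfst (csnd (trace_head t)).
Definition trace_output t := csnd (csnd (trace_head t)).
Definition trace_input t := csnd (chd (trace_args t)).
Local Notation headP x := (PComp p_fst [PComp p_hd [x]]).
Local Notation argsP x := (PComp p_fst [PComp p_snd [headP x]]).
Local Notation outputP x := (PComp p_snd [PComp p_snd [headP x]]).
Local Notation inputP x := (PComp p_snd [PComp p_hd [argsP x]]).

(* [t] is a valid trace headed by a judgement of the program coded by [ne] on the single argument
   [npair pc s]; [trace_input t] is this [s]. *)
Definition trace_for t ne pc := band (valid_trace t) (band (sg t) (band (b2n (cfst (trace_head t) =? ne))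
  (band (sg (trace_args t)) (band (b2n (cfst (chd (trace_args t)) =? pc)) (b2n (ctl (trace_args t) =? 0)))))).
Definition p_trace_for := PComp p_and [PComp p_valid [PProj 0]; PComp p_and [PComp p_sg [PProj 0];
  PComp p_and [PComp p_eq [PComp p_fst [headP (PProj 0)]; PProj 1];
  PComp p_and [PComp p_sg [argsP (PProj 0)]; PComp p_and [PComp p_eq [PComp p_fst [PComp p_hd [argsP (PProj 0)]]; PProj 2];
  PComp p_eq [PComp p_tl [argsP (PProj 0)]; PZero]]]]]].
Lemma computes_trace_for : computes p_trace_for (fun v => trace_for (arg 0 v) (arg 1 v) (arg 2 v)).
Proof. solve_computes p_trace_for. reflexivity. Qed.
#[export] Hint Resolve computes_trace_for : computes.

Lemma trace_for_iff t ne pc : trace_for t ne pc <> 0 <-> valid_trace t <> 0 /\ t <> 0 /\ cfst (trace_head t) = ne /\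
  trace_args t <> 0 /\ cfst (chd (trace_args t)) = pc /\ ctl (trace_args t) = 0.
Proof. unfold trace_for. rewrite !band_nz, !sg_nz, !eqb_nz. tauto. Qed.

Lemma ccons_hd_tl z : z <> 0 -> ccons (chd z) (ctl z) = z.
Proof. destruct z. tauto. intros _. unfold ccons, chd, ctl. simpl. rewrite pair_fs. reflexivity. Qed.

Lemma trace_for_sound t e pc : trace_for t (code e) pc <> 0 ->
  eval e [npair pc (trace_input t)] (trace_output t).
Proof.
  rewrite trace_for_iff. intros [HV [Ht [H1 [H2 [H3 H4]]]]].
  assert (Hc : 0 < clen t).
  { rewrite <- (ldec_ok t) in Ht |- *. rewrite clen_lcode. destruct (ldec t); simpl in *; lia. }
  apply (valid_trace_sound t HV 0 Hc). change (cnth 0 t) with (chd t). fold (trace_head t).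
  rewrite <- (pair_fs (trace_head t)), <- (pair_fs (csnd (trace_head t))).
  unfold judg. rewrite H1. fold (trace_args t) (trace_output t). f_equal. f_equal. simpl lcode.
  rewrite <- (ccons_hd_tl (trace_args t)) by auto. rewrite H4, <- (pair_fs (chd (trace_args t))), H3.
  reflexivity.
Qed.

Lemma trace_for_complete e pc s y : eval e [npair pc s] y ->
  exists t, trace_for t (code e) pc <> 0 /\ trace_input t = s /\ trace_output t = y.
Proof.
  intro H. apply eval_derivable in H as [Ls [G [h [Ls' E]]]].
  exists (lcode Ls).
  assert (HJ : trace_head (lcode Ls) = judg (code e) (lcode [npair pc s]) y).
  { unfold trace_head. subst Ls. simpl lcode. rewrite chd_cons, fst_pair. reflexivity. }
  assert (HV : trace_args (lcode Ls) = ccons (npair pc s) 0).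
  { unfold trace_args. rewrite HJ. unfold judg. rewrite snd_pair, fst_pair. reflexivity. }
  rewrite trace_for_iff. unfold trace_input, trace_output. rewrite HV, HJ. unfold judg.
  rewrite !snd_pair, !fst_pair, chd_cons, ctl_cons, fst_pair, snd_pair.
  repeat split; auto; [apply justified_list_valid; auto|subst Ls; simpl; unfold ccons; lia|unfold ccons; lia].
Qed.

Section Univ.
Variable p_ltD : prf.
Variable ltF : nat -> nat -> nat.
Hypothesis computes_ltD : computes p_ltD (fun v => ltF (arg 0 v) (arg 1 v)).
#[local] Hint Resolve computes_ltD : computes.

Definition le_code x y := bor (b2n (x =? y)) (ltF x y).
Definition dominant_trace t ne pc := band (trace_for t ne pc) (bfaN (S t) (fun t1 =>
  bor (nsg (trace_for t1 ne pc)) (band (b2n (trace_input t1 <=? trace_input t)) (le_code (trace_output t1) (trace_output t))))).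
Definition p_dominates := PComp p_or [PComp p_nsg [PComp p_trace_for [PProj 0; PProj 2; PProj 3]];
  PComp p_and [PComp p_le [inputP (PProj 0); inputP (PProj 1)];
    PComp p_or [PComp p_eq [outputP (PProj 0); outputP (PProj 1)]; PComp p_ltD [outputP (PProj 0); outputP (PProj 1)]]]].
Lemma computes_dominates : computes p_dominates (fun v => bor (nsg (trace_for (arg 0 v) (arg 2 v) (arg 3 v)))
   (band (b2n (trace_input (arg 0 v) <=? trace_input (arg 1 v))) (le_code (trace_output (arg 0 v)) (trace_output (arg 1 v))))).
Proof. solve_computes p_dominates. reflexivity. Qed.
#[local] Hint Resolve computes_dominates : computes.

Definition p_dominant := PComp p_and [p_trace_for; PComp (pbfa 3 p_dominates) [PComp p_S [PProj 0]; PProj 0; PProj 1; PProj 2]].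
Lemma computes_dominant : computes p_dominant (fun v => dominant_trace (arg 0 v) (arg 1 v) (arg 2 v)).
Proof. solve_computes p_dominant. reflexivity. Qed.
#[local] Hint Resolve computes_dominant : computes.

Definition p_dect := PComp p_nsg [PComp p_eq [PComp p_prefix_code [PComp p_fst [PProj 0]; PComp p_snd [PProj 0]];
   PComp p_fst [PProj 1]]].
Lemma computes_dect : computes p_dect (fun v => nsg (b2n (prefix_code (cfst (arg 0 v)) (csnd (arg 0 v)) =? cfst (arg 1 v)))).
Proof. solve_computes p_dect. reflexivity. Qed.

Definition p_chk := PComp p_nsg [PComp p_dominant [PComp p_snd [PProj 1]; PComp p_fst [PProj 2]; PComp p_snd [PProj 2]]].
Lemma computes_chk : computes p_chk (fun v => nsg (dominant_trace (csnd (arg 1 v)) (cfst (arg 2 v)) (csnd (arg 2 v)))).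
Proof. solve_computes p_chk. reflexivity. Qed.

Definition p_output := outputP (PComp p_snd [PProj 0]).
Lemma computes_output : computes p_output (fun v => trace_output (csnd (arg 0 v))).
Proof. solve_computes p_output. reflexivity. Qed.

(* [PMu p_chk] ignores its search variable: it returns [0] on a dominant trace and diverges otherwise. *)
Definition p_out := PComp p_add [p_output; PMu p_chk].
Definition u_prog := PComp p_out [PProj 0; PMu p_dect].

Lemma u_eval_inv z n : eval u_prog [z] n -> exists w, prefix_code (cfst w) (csnd w) = cfst z /\
   dominant_trace (csnd z) (cfst w) (csnd w) <> 0 /\ n = trace_output (csnd z).
Proof.
  intro H. apply inv_comp in H as [ys [Hs Hf]].
  apply inv_cons in Hs as [y1 [ys1 [-> [Hp Hs]]]]. apply inv_proj in Hp. simpl in Hp. subst y1.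
  apply inv_cons in Hs as [w [ys2 [-> [Hw Hs]]]]. apply inv_nil in Hs. subst ys2.
  exists w. apply inv_mu in Hw as [Hw _].
  pose proof (computes_det _ _ _ _ computes_dect Hw) as E1. unfold arg in E1; simpl in E1.
  apply inv_comp in Hf as [ys [Hs Hf]].
  apply inv_cons in Hs as [y1 [ys1 [-> [Hy Hs]]]].
  apply inv_cons in Hs as [k [ys2 [-> [Hk Hs]]]]. apply inv_nil in Hs. subst ys2.
  pose proof (computes_det _ _ _ _ computes_add Hf) as E2. unfold arg in E2; simpl in E2.
  pose proof (computes_det _ _ _ _ computes_output Hy) as E3. unfold arg in E3; simpl in E3.
  apply inv_mu in Hk as [Hk Hall].
  pose proof (computes_det _ _ _ _ computes_chk Hk) as E4. unfold arg in E4; simpl in E4.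
  split; [destruct (Nat.eqb_spec (prefix_code (cfst w) (csnd w)) (cfst z)); [auto|discriminate]|].
  split; [destruct (dominant_trace (csnd z) (cfst w) (csnd w)); simpl in E4; discriminate || lia|].
  destruct k as [|k]; [lia|]. destruct (Hall 0 ltac:(lia)) as [k' [Hk1 Hk2]].
  pose proof (computes_det _ _ _ _ computes_chk Hk2) as E5. unfold arg in E5; simpl in E5. lia.
Qed.

Lemma u_eval_intro z w : prefix_code (cfst w) (csnd w) = cfst z ->
  dominant_trace (csnd z) (cfst w) (csnd w) <> 0 -> eval u_prog [z] (trace_output (csnd z)).
Proof.
  intros H1 H2. econstructor; [repeat constructor|].
  - pose proof (computes_dect (w :: [z])) as H. unfold arg in H; simpl in H.
    rewrite H1, Nat.eqb_refl in H. exact H.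
  - intros m Hm. exists 1. split; auto. pose proof (computes_dect (m :: [z])) as H.
    unfold arg in H; simpl in H.
    destruct (Nat.eqb_spec (prefix_code (cfst m) (csnd m)) (cfst z)) as [E|]; [|exact H].
    rewrite <- H1 in E. apply prefix_code_inj in E as [E1 E2].
    rewrite <- (pair_fs m), <- (pair_fs w), E1, E2 in Hm. lia.
  - unfold p_out. econstructor; [constructor; [apply computes_output|repeat constructor]|].
    + pose proof (computes_chk (0 :: [z; w])) as H. unfold arg in H; simpl in H.
      destruct (dominant_trace (csnd z) (cfst w) (csnd w)); [lia|exact H].
    + intros; lia.
    + pose proof (computes_add [trace_output (csnd (arg 0 [z; w])); 0]) as H.
      unfold arg in *; simpl in *. rewrite Nat.add_0_r in H. exact H.
Qed.

Lemma dominant_trace_iff t ne pc : dominant_trace t ne pc <> 0 <-> trace_for t ne pc <> 0 /\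
  forall t1, t1 <= t -> trace_for t1 ne pc <> 0 -> trace_input t1 <= trace_input t /\
    (trace_output t1 = trace_output t \/ ltF (trace_output t1) (trace_output t) <> 0).
Proof.
  unfold dominant_trace, le_code. rewrite band_nz, bfaN_nz. split; intros [Hok Hall]; split; auto.
  - intros t1 Ht1 Hok1. specialize (Hall t1 ltac:(lia)) as Hall.
    apply bor_nz in Hall as [Hall|Hall]; [apply nsg_nz in Hall; tauto|].
    apply band_nz in Hall as [Hin Hout]. apply b2n_nz, Nat.leb_le in Hin.
    apply bor_nz in Hout. rewrite eqb_nz in Hout. auto.
  - intros t1 Ht1. apply bor_nz.
    destruct (Nat.eq_dec (trace_for t1 ne pc) 0) as [Hnok|Hok1]; [left; apply nsg_nz, Hnok|right].
    destruct (Hall t1 ltac:(lia) Hok1) as [Hin Hout].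
    apply band_nz. rewrite b2n_nz, Nat.leb_le, bor_nz, eqb_nz. auto.
Qed.
End Univ.

(** * Maxima of monotone enumerations *)

Lemma argmax_upto (P : nat -> Prop) (g : nat -> nat) t0 : P t0 ->
  exists t, t <= t0 /\ P t /\ forall t1, t1 <= t0 -> P t1 -> g t1 <= g t.
Proof.
  intro HP0.
  enough (Hgen : forall n, (exists t, t <= n /\ P t) ->
            exists t, t <= n /\ P t /\ forall t1, t1 <= n -> P t1 -> g t1 <= g t)
    by (apply Hgen; eauto).
  induction n as [|n IH]; intros [t [Ht HPt]].
  - exists 0. replace t with 0 in * by lia.
    repeat split; auto. intros t1 Ht1 _. replace t1 with 0 by lia. auto.
  - destruct (classic (exists t', t' <= n /\ P t')) as [Hbelow|Hnone].
    + destruct (IH Hbelow) as [tm [Htm [HPtm Hmax]]].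
      destruct (classic (P (S n) /\ g tm < g (S n))) as [[HPS Hlt]|Hnot].
      * exists (S n). repeat split; auto. intros t1 Ht1 HP1.
        destruct (Nat.eq_dec t1 (S n)) as [->|]; auto.
        specialize (Hmax t1 ltac:(lia) HP1). lia.
      * exists tm. repeat split; auto. intros t1 Ht1 HP1.
        destruct (Nat.eq_dec t1 (S n)) as [->|]; [|apply Hmax; auto; lia].
        apply Nat.nlt_ge. intro; apply Hnot; auto.
    + exists (S n). assert (t = S n) as ->.
      { destruct (Nat.eq_dec t (S n)); auto. exfalso. apply Hnone. exists t. split; auto. lia. }
      repeat split; auto. intros t1 Ht1 HP1.
      destruct (Nat.eq_dec t1 (S n)) as [->|]; auto.
      exfalso. apply Hnone. exists t1. split; auto. lia.
Qed.

Lemma list_of_subset {D : Type} (P : D -> Prop) (l : list D) : (forall x, P x -> In x l) ->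
  exists l', forall x, P x <-> In x l'.
Proof.
  revert P; induction l as [|x0 l IHl]; intros P Hsub.
  - exists []. intro x. split; [apply Hsub|intros []].
  - destruct (IHl (fun x => P x /\ x <> x0)) as [l' Hl'].
    { intros x [Hx Hne]. destruct (Hsub x Hx); [congruence|auto]. }
    destruct (classic (P x0)) as [HP0|HP0].
    + exists (x0 :: l'). intro x. simpl. rewrite <- Hl'.
      destruct (classic (x0 = x)) as [<-|Hne]; intuition.
    + exists l'. intro x. rewrite <- Hl'. split; [|tauto]. intro Hx. split; congruence.
Qed.

Section MaxOfValues.
Variables (D : Type) (lt : D -> D -> Prop).
Hypothesis lt_irrefl : forall x, ~ lt x x.
Hypothesis lt_trans : forall x y z, lt x y -> lt y z -> lt x z.

Definition le_po x y := x = y \/ lt x y.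

Lemma le_po_trans x y z : le_po x y -> le_po y z -> le_po x z.
Proof. unfold le_po. intros [->|H1] [->|H2]; eauto. Qed.

Lemma le_po_antisym x y : le_po x y -> le_po y x -> x = y.
Proof. unfold le_po. intros [->|H1] [H2|H2]; auto. exfalso; apply (lt_irrefl x); eauto. Qed.

(* [is_maxD lt f F] says exactly [F p = Some d <-> is_max_of (values of f p) d]. *)
Definition is_max_of (V : D -> Prop) d :=
  (exists l : list D, forall d', V d' <-> In d' l) /\ V d /\ (forall d', V d' -> d' = d \/ lt d' d).

Lemma is_max_of_unique V d d' : is_max_of V d -> is_max_of V d' -> d = d'.
Proof. intros [_ [H1 H2]] [_ [H3 H4]]. apply le_po_antisym; [apply H4|apply H2]; auto. Qed.

Section Dominated.
Variable f : nat -> option D.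
Hypothesis f_mono : forall t t' d d', t <= t' -> f t = Some d -> f t' = Some d' -> le_po d d'.
Variable V : D -> Prop.
Hypothesis V_values : forall x, V x -> exists s, f s = Some x.
Hypothesis V_dominates : forall s d0, f s = Some d0 ->
  exists s' d, s <= s' /\ f s' = Some d /\ V d /\ le_po d0 d.

Lemma is_max_of_dominated d : is_max_of V d <-> is_max_of (fun x => exists s, f s = Some x) d.
Proof.
  split.
  - intros [_ [Hd Hmax]]. destruct (V_values d Hd) as [s1 Hs1].
    assert (Hle : forall x, (exists s, f s = Some x) -> le_po x d).
    { intros x [s Hs]. destruct (V_dominates s x Hs) as [s' [d' [_ [_ [Hv Hl]]]]].
      eapply le_po_trans; [exact Hl|]. apply Hmax; auto. }
    split; [|split; eauto].
    (* from stage [s1] on, [f] is stuck at its maximum [d] *)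
    exists (d :: flat_map (fun s => match f s with Some x => [x] | None => [] end) (seq 0 s1)).
    intro x. simpl. rewrite in_flat_map. split.
    + intros [s Hs]. destruct (Nat.lt_ge_cases s s1).
      * right. exists s. split; [apply in_seq; lia|]. rewrite Hs. simpl; auto.
      * left. apply le_po_antisym; [eapply f_mono; eauto|apply Hle; eauto].
    + intros [<-|[s [_ Hs]]]; [eauto|].
      destruct (f s) eqn:E; simpl in Hs; [|tauto]. destruct Hs as [<-|[]]. eauto.
  - intros [[lf Hlf] [[s0 Hs0] Hmax]].
    destruct (list_of_subset V lf) as [l Hl]. { intros x Hx. apply Hlf. auto. }
    split; [eauto|]. destruct (V_dominates s0 d Hs0) as [s' [d' [_ [Hs' [Hv Hl']]]]].
    assert (d' = d) as <- by (apply le_po_antisym; [apply Hmax; eauto|auto]).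
    split; [auto|]. intros x Hx. apply Hmax, V_values, Hx.
Qed.
End Dominated.

Definition max_fun (f : list bool -> nat -> option D) (q : list bool) : option D :=
  match excluded_middle_informative (exists d, is_max_of (fun x => exists t, f q t = Some x) d) with
  | left H => Some (proj1_sig (constructive_indefinite_description _ H))
  | right _ => None
  end.

Lemma is_maxD_max_fun f : is_maxD lt f (max_fun f).
Proof.
  intros q d. unfold max_fun. destruct excluded_middle_informative as [H|H].
  - destruct (constructive_indefinite_description _ H) as [d' Hd']. simpl. split.
    + intro E. injection E as <-. exact Hd'.
    + intro Hd. f_equal. eapply is_max_of_unique; eauto.
  - split; [discriminate|]. intro Hd. exfalso. exact (H (ex_intro _ d Hd)).
Qed.
End MaxOfValues.
Arguments le_po {D} lt x y.
Arguments max_fun {D} lt f q.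

(** * The universal function *)

Definition prog_fun {D : Type} (rho : nat -> D) (P : prf) (q : list bool) (t : nat) : option D :=
  match excluded_middle_informative (exists n, eval P [npair (bcode q) t] n) with
  | left H => Some (rho (proj1_sig (constructive_indefinite_description _ H)))
  | right _ => None
  end.

Lemma prog_fun_spec {D : Type} (rho : nat -> D) P q t d :
  prog_fun rho P q t = Some d <-> exists n, eval P [npair (bcode q) t] n /\ d = rho n.
Proof.
  unfold prog_fun. destruct excluded_middle_informative as [H|H].
  - destruct (constructive_indefinite_description _ H) as [n Hn]. simpl. split.
    + intro E. injection E as <-. eauto.
    + intros [n' [Hn' ->]]. rewrite (eval_det _ _ _ Hn _ Hn'). reflexivity.
  - split; [discriminate|]. intros [n [Hn _]]. exfalso; eauto.
Qed.

Lemma pc2_prog_fun {D : Type} (rho : nat -> D) P :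
  (forall m n, rho m = rho n -> m = n) -> pc2 rho (prog_fun rho P).
Proof.
  intro rho_inj. exists P. intros p t n. rewrite prog_fun_spec. split; [eauto|].
  intros [n' [Hn' E]]. rewrite (rho_inj _ _ E). exact Hn'.
Qed.

Lemma KC_exists_le {D : Type} (phi : list bool -> option D) d p : phi p = Some d ->
  exists k, KC phi d k /\ k <= length p.
Proof.
  intro Hp.
  assert (Hex : exists k, exists p, phi p = Some d /\ length p = k) by eauto.
  apply Wf_nat.dec_inh_nat_subset_has_unique_least_element in Hex as [k [[[p' [H1 H2]] Hmin] _]];
    [|intro k; apply classic].
  exists k. split; [split|]; [eauto|intros p0 Hp0; apply Hmin; eauto|apply Hmin; eauto].
Qed.

Lemma KC_translate {D : Type} (F U : list bool -> option D) (g : list bool -> list bool) c :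
  (forall p d, F p = Some d -> U (g p) = Some d) -> (forall p, length (g p) <= length p + c) ->
  forall d, (exists p, F p = Some d) -> exists kU kF, KC U d kU /\ KC F d kF /\ kU <= kF + c.
Proof.
  intros Hsim Hlen d [p Hp].
  destruct (KC_exists_le F d p Hp) as [kF [HkF _]].
  pose proof HkF as [[p0 [Hp0 Hlen0]] _].
  destruct (KC_exists_le U d (g p0) (Hsim _ _ Hp0)) as [kU [HkU HkU_le]].
  exists kU, kF. split; [exact HkU|split; [exact HkF|]]. specialize (Hlen p0). lia.
Qed.

Section Universal.
Variables (D : Type) (lt : D -> D -> Prop) (rho : nat -> D).
Hypothesis HD : computable_poset D lt rho.

Definition lt_code m n : nat := if excluded_middle_informative (lt (rho m) (rho n)) then 1 else 0.

Lemma lt_code_nz m n : lt_code m n <> 0 <-> lt (rho m) (rho n).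
Proof. unfold lt_code. destruct excluded_middle_informative; split; auto; lia. Qed.

Lemma lt_code_computable : exists p, computes p (fun v => lt_code (arg 0 v) (arg 1 v)).
Proof.
  destruct (cp_dec _ _ _ HD) as [e He]. exists (PComp e [p_pair]).
  intro v. econstructor; [constructor; [apply computes_pair|constructor]|].
  unfold lt_code. destruct excluded_middle_informative; apply He; auto.
Qed.

Variable p_lt : prf.
Hypothesis computes_p_lt : computes p_lt (fun v => lt_code (arg 0 v) (arg 1 v)).

Definition u_fun : list bool -> nat -> option D := prog_fun rho (u_prog p_lt).

Lemma dominant_trace_lt t ne pc :
  dominant_trace lt_code t ne pc <> 0 <-> trace_for t ne pc <> 0 /\
    forall t1, t1 <= t -> trace_for t1 ne pc <> 0 ->
      trace_input t1 <= trace_input t /\ le_po lt (rho (trace_output t1)) (rho (trace_output t)).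
Proof.
  assert (rho_eq : forall m n, rho m = rho n <-> m = n)
    by (split; [apply (cp_inj _ _ _ HD)|intros ->; reflexivity]).
  rewrite dominant_trace_iff. unfold le_po. setoid_rewrite lt_code_nz. setoid_rewrite rho_eq. tauto.
Qed.

Lemma u_fun_spec q t d : u_fun q t = Some d <->
  exists ne pc, prefix_code ne pc = bcode q /\ dominant_trace lt_code t ne pc <> 0 /\
                d = rho (trace_output t).
Proof.
  unfold u_fun. rewrite prog_fun_spec. split.
  - intros [n [Hn ->]]. apply (u_eval_inv p_lt lt_code computes_p_lt) in Hn as [w [H1 [H2 ->]]].
    rewrite fst_pair, snd_pair in *. eauto.
  - intros [ne [pc [H1 [H2 ->]]]]. exists (trace_output t). split; [|reflexivity].
    pose proof (u_eval_intro p_lt lt_code computes_p_lt (npair (bcode q) t) (npair ne pc)) as H.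
    rewrite !fst_pair, !snd_pair in H. auto.
Qed.

Lemma monotone2_u_fun : monotone2 lt u_fun.
Proof.
  intros q t t' d d' Htt Hd Hd'. apply u_fun_spec in Hd, Hd'.
  destruct Hd as [ne [pc [E1 [C1 ->]]]]. destruct Hd' as [ne' [pc' [E2 [C2 ->]]]].
  rewrite <- E2 in E1. apply prefix_code_inj in E1 as [-> ->].
  apply dominant_trace_lt in C1, C2. apply (proj2 C2 t Htt (proj1 C1)).
Qed.

Lemma MaxPR_max_u_fun : MaxPR lt rho (max_fun lt u_fun).
Proof.
  exists u_fun. split; [apply pc2_prog_fun, (cp_inj _ _ _ HD)|].
  split; [apply monotone2_u_fun|apply is_maxD_max_fun; apply HD].
Qed.

Definition index_prefix (e : prf) (p : list bool) : list bool := repeat true (code e) ++ false :: p.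

Lemma u_fun_index_prefix e p t x : u_fun (index_prefix e p) t = Some x <->
  dominant_trace lt_code t (code e) (bcode p) <> 0 /\ x = rho (trace_output t).
Proof.
  rewrite u_fun_spec. unfold index_prefix. rewrite bcode_prefix. split.
  - intros [ne [pc [E [C ->]]]]. apply prefix_code_inj in E as [-> ->]. auto.
  - intros [C ->]. eauto.
Qed.

Section Simulation.
Variables (f : list bool -> nat -> option D) (e : prf) (p : list bool).
Hypothesis e_computes_f : forall p t n, eval e [npair (bcode p) t] n <-> f p t = Some (rho n).
Hypothesis f_mono : monotone2 lt f.

Lemma f_trace_for t : trace_for t (code e) (bcode p) <> 0 ->
  f p (trace_input t) = Some (rho (trace_output t)).
Proof. intro Ht. apply e_computes_f, trace_for_sound, Ht. Qed.

Lemma u_values_are_f_values x :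
  (exists t, u_fun (index_prefix e p) t = Some x) -> exists s, f p s = Some x.
Proof.
  intros [t Ht]. apply u_fun_index_prefix in Ht as [C ->].
  apply dominant_trace_lt in C as [C _]. exists (trace_input t). apply f_trace_for, C.
Qed.

(* The witness is the trace of largest input among the valid traces up to one computing [f p s]. *)
Lemma f_values_dominated s d0 : f p s = Some d0 ->
  exists s' d, s <= s' /\ f p s' = Some d /\ (exists t, u_fun (index_prefix e p) t = Some d) /\
               le_po lt d0 d.
Proof.
  intro Hs. destruct (cp_surj _ _ _ HD d0) as [y <-].
  apply e_computes_f, trace_for_complete in Hs as [t0 [Hok0 [Hin0 Hout0]]].
  destruct (argmax_upto (fun t => trace_for t (code e) (bcode p) <> 0) trace_input t0 Hok0)
    as [ts [Hts [Hoks Hmax]]].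
  exists (trace_input ts), (rho (trace_output ts)).
  assert (Hle : s <= trace_input ts) by (rewrite <- Hin0; apply Hmax; auto).
  repeat split; [exact Hle|apply f_trace_for, Hoks| |].
  - exists ts. apply u_fun_index_prefix. split; auto.
    apply dominant_trace_lt. split; auto. intros t1 Ht1 Hok1.
    assert (Hin1 : trace_input t1 <= trace_input ts) by (apply Hmax; auto; lia).
    split; auto. exact (f_mono p _ _ _ _ Hin1 (f_trace_for t1 Hok1) (f_trace_for ts Hoks)).
  - rewrite <- Hout0. eapply f_mono; [exact Hle| |apply f_trace_for, Hoks].
    rewrite <- Hin0. apply f_trace_for, Hok0.
Qed.

Lemma max_u_fun_index_prefix F d : is_maxD lt f F -> F p = Some d ->
  max_fun lt u_fun (index_prefix e p) = Some d.
Proof.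
  intros HF Hp.
  pose proof (cp_irrefl _ _ _ HD) as lt_irrefl. pose proof (cp_trans _ _ _ HD) as lt_trans.
  apply (is_maxD_max_fun D lt lt_irrefl lt_trans).
  refine (proj2 (is_max_of_dominated D lt lt_irrefl lt_trans (f p) _ _ _ _ d) _).
  - intros t t'. apply f_mono.
  - apply u_values_are_f_values.
  - apply f_values_dominated.
  - apply HF, Hp.
Qed.
End Simulation.
End Universal.

Theorem mainTheorem5 (D : Type) (lt : D -> D -> Prop) (rho : nat -> D)
  (HD : @computable_poset D lt rho) :
  exists U, MaxPR lt rho U /\
    forall F, MaxPR lt rho F ->
      exists c : nat, forall d : D, (exists p, F p = Some d) ->
        exists kU kF, KC U d kU /\ KC F d kF /\ kU <= kF + c.
Proof.
  destruct (lt_code_computable D lt rho HD) as [p_lt Hp_lt].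
  exists (max_fun lt (u_fun D rho p_lt)). split; [exact (MaxPR_max_u_fun D lt rho HD p_lt Hp_lt)|].
  intros F [f [[e He] [Hmono HF]]]. exists (S (code e)).
  apply (KC_translate F _ (index_prefix e)).
  - intros p d Hp. exact (max_u_fun_index_prefix D lt rho HD p_lt Hp_lt f e p He Hmono F d HF Hp).
  - intro p. unfold index_prefix. rewrite length_app, repeat_length. simpl. lia.
Qed.
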